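(* Let $G$ be a finite connected graph with node set $V$ and let $r$ be a ranking of $V$. There is a one-to-all distance based algorithm which computes all eccentricities $e(v)$, $v\in V$, a tight lower certificate $L\subseteq A_r(V)$, and the set $U^{\preceq}$ (which is the unique minimum-size tight upper certificate), using $|U^{\preceq}|+2|L|$ one-to-all distance queries.
   Context: $G$ is undirected, unweighted, connected with finite node set $V$; $d$ is shortest-path distance, $e(u)=\max_v d(u,v)$. A ranking $r$ is an injective map from $V$ to a totally ordered set; the antipode $A_r(u)$ is the node $v$ maximizing $(d(u,v),r(v))$ lexicographically; $A_r(V)=\{A_r(u):u\in V\}$. A one-to-all distance query from $x$ computes $(d(x,v))_{v\in V}$. For $L\subseteq V$, $e_L(v)=\max_{x\in L}d(v,x)$; for $U\subseteq V$, $e^U(v)=\min_{x\in U}(d(v,x)+e(x))$. $L$ is a tight lower certificate if $e_L(v)=e(v)$ for all $v$; $U$ is a tight upper certificate if $e^U(v)=e(v)$ for all $v$. Write $u\preceq x$ if $e(u)=d(u,x)+e(x)$; $U^{\preceq}$ is the set of nodes $x$ that are maximal for $\preceq$ (i.e. $x\preceq y$ implies $y=x$). *)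

From mathcomp Require Import all_boot all_order.
Set Implicit Arguments. Unset Strict Implicit. Unset Printing Implicit Defensive.
Import Order.TTheory.

Section Graph.
Variable V : finType.
Variable adj : rel V.

Definition undirected_graph := symmetric adj /\ irreflexive adj.
Definition connected_graph := forall u v : V, connect adj u v.

Definition walk_of_len (n : nat) (u v : V) : bool :=
  [exists p : n.-tuple V, path adj u p && (last u p == v)].

(* shortest-path distance: least length of a walk (a shortest walk is a path);
   default #|V| never used for connected graphs *)
Definition dist (u v : V) : nat :=
  \big[minn/#|V|]_(n < #|V| | walk_of_len n u v) n.

Definition ecc (u : V) : nat := \max_(v : V) dist u v.

Definition eccL (L : {set V}) (v : V) : nat := \max_(x in L) dist v x.

Definition tight_lower (L : {set V}) : Prop := forall v, eccL L v = ecc v.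

(* e^U(v) = min_{x in U} (d(v,x) + e(x)); "e^U(v) = e(v)" written out:
   the minimum over U is attained with value e(v). *)
Definition tight_upper (U : {set V}) : Prop :=
  forall v, (exists2 x, x \in U & dist v x + ecc x = ecc v) /\
            (forall x, x \in U -> ecc v <= dist v x + ecc x).

Definition prec (u x : V) : bool := ecc u == dist u x + ecc x.

Definition Umax : {set V} := [set x | [forall y, prec x y ==> (y == x)]].

Definition is_antipode (disp : Order.disp_t) (R : orderType disp) (r : V -> R)
  (u v : V) : bool :=
  [forall w, (dist u w < dist u v) || ((dist u w == dist u v) && (r w <= r v)%O)].

Definition antipodes (disp : Order.disp_t) (R : orderType disp) (r : V -> R)
  : {set V} := [set v | [exists u, is_antipode r u v]].

End Graph.

(* One-to-all distance based algorithms on node set V: decision trees whose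
   only access to the graph is a query "Ask x", answered by the distance
   vector (d(x,v))_{v in V}; leaves output (eccentricities, L, U). *)
Inductive dalg (V : finType) : Type :=
| Ask : V -> ((V -> nat) -> dalg V) -> dalg V
| Ret : (V -> nat) -> {set V} -> {set V} -> dalg V.

Fixpoint run_out (V : finType) (d : V -> V -> nat) (A : dalg V)
  : (V -> nat) * {set V} * {set V} :=
  match A with
  | Ask x k => run_out d (k (d x))
  | Ret e L U => (e, L, U)
  end.

Fixpoint run_queries (V : finType) (d : V -> V -> nat) (A : dalg V) : nat :=
  match A with
  | Ask x k => (run_queries d (k (d x))).+1
  | Ret _ _ _ => 0
  end.

(* The algorithm maintains the queried set Q, a set L of antipodes in Q and
   the bounds e_L(v) <= e(v) <= e^Q(v); a node is unsettled while the two
   bounds differ.  It repeatedly queries an unsettled node v with least e_L(v).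
   If e_L(v) < e(v), it also queries the antipode of v and puts it in L, which
   settles v: two queries per element of L.  Otherwise v is maximal for the
   order u ⪯ x: a node z <> v with v ⪯ z has e_L(z) <= e(z) < e(v) = e_L(v),
   so z is settled by minimality, and e^Q(v) <= d(v,z) + e^Q(z) <= e(v) would
   settle v; one query per node of U^⪯.  When no node is unsettled, e_L = e =
   e^Q, so L is tight and Q is a tight upper certificate.  Every tight upper
   certificate U contains each ⪯-maximal x, because the minimum defining
   e^U(x) is attained at some y with x ⪯ y; hence U^⪯ is read off from the
   answers for Q, and it is the least tight upper certificate. *)

From Pilot Require Import Defs.
From mathcomp Require Import all_boot all_order.
From mathcomp Require Import zify.
Set Implicit Arguments. Unset Strict Implicit. Unset Printing Implicit Defensive.
Import Order.TTheory.

Section BigMinNat.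
Variables (I : finType) (P : pred I) (F : I -> nat) (b : nat).

Lemma bigminn_le_cond j : P j -> \big[minn/b]_(i | P i) F i <= F j.
Proof. by move=> Pj; rewrite -minEnat; exact: (bigmin_le_cond b F Pj). Qed.

Lemma bigminn_le_id : \big[minn/b]_(i | P i) F i <= b.
Proof. by rewrite -minEnat; exact: (bigmin_le_id _ b P F). Qed.

Lemma le_bigminn m : m <= b -> (forall i, P i -> m <= F i) ->
  m <= \big[minn/b]_(i | P i) F i.
Proof. by move=> mb mF; elim/big_ind: _ => // x y; rewrite leq_min => -> ->. Qed.

Lemma bigminn_attained : \big[minn/b]_(i | P i) F i < b ->
  exists2 i, P i & \big[minn/b]_(i | P i) F i = F i.
Proof.
apply: (big_ind (fun m => m < b -> exists2 i, P i & m = F i)) => [|x y|i Pi _].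
- by rewrite ltnn.
- by rewrite /minn; case: ifP.
- by exists i.
Qed.

End BigMinNat.

Section Distance.
Variables (V : finType) (adj : rel V).
Local Notation dist := (dist adj).
Local Notation ecc := (ecc adj).

Lemma walk_of_lenP n u v :
  reflect (exists2 p : seq V, size p = n & path adj u p && (last u p == v))
          (walk_of_len adj n u v).
Proof.
apply: (iffP existsP) => [[p pP] | [p /eqP sz pP]].
  by exists p; rewrite ?size_tuple.
by exists (Tuple sz).
Qed.

Lemma dist_le_card u v : dist u v <= #|V|.
Proof. exact: bigminn_le_id. Qed.

Lemma dist_le_walk n u v : n < #|V| -> walk_of_len adj n u v -> dist u v <= n.
Proof.
move=> nV uv; exact: (bigminn_le_cond (fun i : 'I_#|V| => val i) _ (j := Ordinal nV)).
Qed.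

Lemma walk_dist u v : dist u v < #|V| -> walk_of_len adj (dist u v) u v.
Proof. by case/bigminn_attained=> n walk_n; rewrite /Defs.dist => ->. Qed.

Lemma dist0 u : dist u u = 0.
Proof.
apply/eqP; rewrite -leqn0; apply: dist_le_walk; first by apply/card_gt0P; exists u.
by apply/walk_of_lenP; exists [::]; rewrite //= eqxx.
Qed.

Lemma dist_eq0 u v : dist u v = 0 -> u = v.
Proof.
move=> d0; have /walk_dist : dist u v < #|V| by rewrite d0; apply/card_gt0P; exists u.
by rewrite d0 => /walk_of_lenP [[|//] _ /eqP].
Qed.

Lemma dist_triangle u v w : dist u w <= dist u v + dist v w.
Proof.
have [uv_long|uv] := leqP #|V| (dist u v).
  by apply: leq_trans (dist_le_card _ _) (leq_trans uv_long (leq_addr _ _)).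
have [vw_long|vw] := leqP #|V| (dist v w).
  by apply: leq_trans (dist_le_card _ _) (leq_trans vw_long (leq_addl _ _)).
have [long|short] := leqP #|V| (dist u v + dist v w).
  exact: leq_trans (dist_le_card _ _) long.
apply: dist_le_walk short _; apply/walk_of_lenP.
move/walk_dist/walk_of_lenP: uv => [p <- /andP [up /eqP pv]].
move/walk_dist/walk_of_lenP: vw => [q <- /andP [vq /eqP qw]].
by exists (p ++ q); rewrite ?size_cat // cat_path last_cat pv up vq qw eqxx.
Qed.

Hypothesis adj_sym : symmetric adj.

Lemma dist_sym u v : dist u v = dist v u.
Proof.
suff le_dist x y : dist x y <= dist y x by apply/eqP; rewrite eqn_leq !le_dist.
have [long|short] := leqP #|V| (dist y x); first exact: leq_trans (dist_le_card _ _) long.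
move/walk_dist/walk_of_lenP: (short) => [p sz /andP [yp /eqP px]].
apply: dist_le_walk short _; apply/walk_of_lenP.
exists (rev (belast y p)); first by rewrite size_rev size_belast.
rewrite -{1}px rev_path (eq_path (e' := adj)) => [|a b]; last exact: adj_sym.
rewrite yp /=; case: p {sz yp} px => [/= <-|z p _]; first by rewrite eqxx.
by rewrite /= rev_cons last_rcons.
Qed.

End Distance.

Section Eccentricity.
Variables (V : finType) (adj : rel V).
Local Notation dist := (dist adj).
Local Notation ecc := (ecc adj).
Local Notation eccL := (eccL adj).
Local Notation prec := (prec adj).
Local Notation Umax := (Umax adj).

Lemma dist_le_ecc u v : dist u v <= ecc u.
Proof. exact: leq_bigmax. Qed.

Lemma ecc_le_card u : ecc u <= #|V|.
Proof. by apply/bigmax_leqP => v _; apply: dist_le_card. Qed.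

Lemma ecc_le_dist_ecc u x : ecc u <= dist u x + ecc x.
Proof.
apply/bigmax_leqP => w _; apply: leq_trans (dist_triangle adj u x w) _.
by rewrite leq_add2l dist_le_ecc.
Qed.

Lemma prec_refl u : prec u u.
Proof. by rewrite /prec dist0. Qed.

Lemma prec_trans u x y : prec u x -> prec x y -> prec u y.
Proof.
rewrite /prec => /eqP ux /eqP xy; rewrite eqn_leq ecc_le_dist_ecc ux xy.
by rewrite addnA leq_add2r dist_triangle.
Qed.

Lemma prec_Umax v : exists2 x, x \in Umax & prec v x.
Proof.
have [x vx xmin] := arg_minnP ecc (prec_refl v).
exists x => //; rewrite inE; apply/forallP => y; apply/implyP => xy.
have := xmin y (prec_trans vx xy); move/eqP: xy => ->.
by rewrite -{2}[ecc y]add0n leq_add2r leqn0 => /eqP/dist_eq0 ->.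
Qed.

Lemma tight_upper_Umax : tight_upper adj Umax.
Proof.
move=> v; split=> [|x _]; last exact: ecc_le_dist_ecc.
by have [x xU /eqP vx] := prec_Umax v; exists x.
Qed.

Lemma Umax_subset U : tight_upper adj U -> Umax \subset U.
Proof.
move=> tightU; apply/subsetP => x; rewrite inE => /forallP xmax.
have [[y yU xy] _] := tightU x.
by have /implyP/(_ _)/eqP <- := xmax y; rewrite // /prec xy.
Qed.

Lemma Umax_min_card U : tight_upper adj U ->
  #|Umax| <= #|U| /\ (#|U| = #|Umax| -> U = Umax).
Proof.
move=> /Umax_subset sub; split=> [|card_eq]; first exact: subset_leq_card.
by apply/esym/eqP; rewrite eqEcard sub card_eq /=.
Qed.

Lemma eccL_le_ecc (L : {set V}) v : eccL L v <= ecc v.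
Proof. by apply/bigmax_leqP => x _; apply: dist_le_ecc. Qed.

Lemma eccL_subset (L L' : {set V}) v : L \subset L' -> eccL L v <= eccL L' v.
Proof.
by move/subsetP=> sub; apply/bigmax_leqP => x /sub; apply: leq_bigmax_cond.
Qed.

(* [#|V|.+1] stands for +oo: it exceeds every eccentricity. *)
Definition eccU (Q : {set V}) (v : V) : nat :=
  \big[minn/#|V|.+1]_(x in Q) (dist v x + ecc x).

Lemma ecc_le_eccU (Q : {set V}) v : ecc v <= eccU Q v.
Proof.
by apply: le_bigminn => [|x _]; [exact/leqW/ecc_le_card | exact: ecc_le_dist_ecc].
Qed.

Lemma eccU_le_ecc (Q : {set V}) v : v \in Q -> eccU Q v <= ecc v.
Proof. by move=> vQ; rewrite -[ecc v]add0n -(dist0 adj v) bigminn_le_cond. Qed.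

Lemma eccU_subset (Q Q' : {set V}) v : Q \subset Q' -> eccU Q' v <= eccU Q v.
Proof.
move/subsetP=> sub; apply: le_bigminn => [|x /sub xQ']; first exact: bigminn_le_id.
exact: bigminn_le_cond.
Qed.

Lemma eccU_le_dist_eccU (Q : {set V}) v z : eccU Q v <= dist v z + eccU Q z.
Proof.
rewrite /eccU -leq_subLR; apply: le_bigminn => [|x xQ].
  exact: leq_trans (leq_subr _ _) (bigminn_le_id _ _ _).
rewrite leq_subLR addnA; apply: leq_trans (bigminn_le_cond _ _ xQ) _.
by rewrite leq_add2r dist_triangle.
Qed.

Lemma tight_upper_eccU (Q : {set V}) :
  (forall v, eccU Q v = ecc v) -> tight_upper adj Q.
Proof.
move=> eccUE v; split=> [|x _]; last exact: ecc_le_dist_ecc.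
have /bigminn_attained [x xQ vx] : eccU Q v < #|V|.+1 by rewrite eccUE ltnS ecc_le_card.
by exists x; rewrite // -vx; apply: eccUE.
Qed.

Definition unsettled (L Q : {set V}) (v : V) : bool := eccL L v < eccU Q v.

Lemma unsettled_subset (L L' Q Q' : {set V}) v : L \subset L' -> Q \subset Q' ->
  unsettled L' Q' v -> unsettled L Q v.
Proof.
move=> sL sQ lt'; apply: leq_ltn_trans (eccL_subset v sL) _.
exact: leq_trans lt' (eccU_subset v sQ).
Qed.

Lemma settled_asked (L Q : {set V}) v :
  v \in Q -> ecc v <= eccL L v -> ~~ unsettled L Q v.
Proof. by move=> vQ ecc_v; rewrite -leqNgt (leq_trans (eccU_le_ecc vQ)). Qed.

Lemma settled_eccE (L Q : {set V}) v :
  ~~ unsettled L Q v -> eccL L v = ecc v /\ eccU Q v = ecc v.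
Proof.
rewrite -leqNgt => settled.
have := eccL_le_ecc L v; have := ecc_le_eccU Q v; lia.
Qed.

Lemma least_unsettled_Umax (L Q : {set V}) v :
  unsettled L Q v -> (forall w, unsettled L Q w -> eccL L v <= eccL L w) ->
  ecc v <= eccL L v -> v \in Umax.
Proof.
move=> v_unsettled v_least ecc_v; rewrite inE; apply/forallP => z.
apply/implyP => /eqP vz; apply/eqP/esym/(@dist_eq0 _ adj)/eqP.
apply: contraTT v_unsettled.
rewrite -lt0n => dvz; have eccLz := eccL_le_ecc L z.
have : ~~ unsettled L Q z by apply/negP => /v_least; lia.
rewrite /unsettled -!leqNgt; have := eccU_le_dist_eccU Q v z; lia.
Qed.

Lemma is_antipode_dist (disp : Order.disp_t) (R : orderType disp) (r : V -> R)
    u a :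
  is_antipode adj r u a -> dist u a = ecc u.
Proof.
move/forallP => a_max; apply/eqP; rewrite eqn_leq dist_le_ecc.
apply/bigmax_leqP => w _.
by case/orP: (a_max w) => [/ltnW | /andP [/eqP -> _]].
Qed.

End Eccentricity.

Section Algorithm.
Variables (V : finType) (disp : Order.disp_t) (R : orderType disp) (r : V -> R).

Definition antipode (dv : V -> nat) (v : V) : V :=
  [arg max_(w > v) ((dv w, r w) : nat *l R)]%O.

(* [answer s x] is the distance vector returned by the query at
   [x \in asked s]; [ufound s] collects the nodes shown to be ⪯-maximal
   without querying an antipode. *)
Record state := State {
  asked : {set V};
  answer : V -> V -> nat;
  lcert : {set V};
  ufound : {set V} }.

Definition lower (s : state) (v : V) : nat := \max_(x in lcert s) answer s x v.

Definition upper (s : state) (v : V) : nat :=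
  \big[minn/#|V|.+1]_(x in asked s) (answer s x v + \max_y answer s x y).

Definition candidate (s : state) (v : V) : bool := lower s v < upper s v.

Definition record_answer (s : state) (x : V) (dx : V -> nat) : state :=
  State (x |: asked s) (fun y => if y == x then dx else answer s y) (lcert s) (ufound s).

Definition add_lcert (s : state) (a : V) : state :=
  State (asked s) (answer s) (a |: lcert s) (ufound s).

Definition add_ufound (s : state) (v : V) : state :=
  State (asked s) (answer s) (lcert s) (v |: ufound s).

Definition umax_of (s : state) : {set V} :=
  [set x in asked s | [forall y, (lower s x == answer s x y + lower s y) ==> (y == x)]].

Definition requery (xs : seq V) (A : dalg V) : dalg V :=
  foldr (fun x B => Ask x (fun=> B)) A xs.

(* The nodes of [U^⪯] missing from [ufound s] were already queried (as
   nodes needing an antipode, or as antipodes); querying them once more makes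
   the number of queries exactly [|U^⪯| + 2|L|]. *)
Definition finish (s : state) : dalg V :=
  requery (enum (umax_of s :\: ufound s)) (Ret (lower s) (lcert s) (umax_of s)).

Fixpoint search (n : nat) (s : state) : dalg V :=
  if n is n'.+1 then
    if [pick v0 | candidate s v0] is Some v0 then
      let v := [arg min_(v < v0 | candidate s v) lower s v] in
      Ask v (fun dv =>
        if lower s v < \max_y dv y then
          let a := antipode dv v in
          Ask a (fun da =>
            search n' (add_lcert (record_answer (record_answer s v dv) a da) a))
        else search n' (add_ufound (record_answer s v dv) v))
    else finish s
  else finish s.

Definition init : state := State set0 (fun _ _ => 0) set0 set0.

Lemma run_out_requery d xs A : run_out d (requery xs A) = run_out d A.
Proof. by elim: xs. Qed.

Lemma run_queries_requery d xs A :
  run_queries d (requery xs A) = size xs + run_queries d A.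
Proof. by elim: xs => //= x xs ->. Qed.

Section Correctness.
Variable adj : rel V.
Hypothesis adj_sym : symmetric adj.
Local Notation dist := (dist adj).
Local Notation ecc := (ecc adj).
Local Notation eccL := (eccL adj).
Local Notation eccU := (eccU adj).
Local Notation unsettled := (unsettled adj).

Lemma antipode_is_antipode v : is_antipode adj r v (antipode (dist v) v).
Proof.
apply/forallP => w; rewrite /antipode; case: arg_maxP => // a _ /(_ w isT).
case/andP => /= /[!leEnat] dwa; rewrite ltn_neqAle dwa andbT.
by case: eqVneq => //= -> /implyP; apply.
Qed.

Record invariant (s : state) : Prop := Invariant {
  answer_dist : {in asked s, forall x, answer s x =1 dist x};
  lcert_asked : lcert s \subset asked s;
  lcert_antipodes : lcert s \subset antipodes adj r;
  ufound_Umax : ufound s \subset Umax adj;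
  ufound_settled : {in ufound s, forall x, ~~ unsettled (lcert s) (asked s) x} }.

Lemma invariant_init : invariant init.
Proof. by split; rewrite //= ?sub0set // => x; rewrite inE. Qed.

Lemma answer_dist_record s x :
  {in asked s, forall y, answer s y =1 dist y} ->
  {in asked (record_answer s x (dist x)), forall y,
     answer (record_answer s x (dist x)) y =1 dist y}.
Proof.
by move=> ans y; rewrite /= in_setU1; case: eqVneq => [-> //|_ /= yQ]; apply: ans.
Qed.

Lemma lowerE s : invariant s -> lower s =1 eccL (lcert s).
Proof.
case=> ans lcQ _ _ _ v; apply: eq_bigr => x xL.
by rewrite ans ?(subsetP lcQ) // dist_sym.
Qed.

Lemma upperE s : invariant s -> upper s =1 eccU (asked s).
Proof.
case=> ans _ _ _ _ v; apply: eq_bigr => x xQ.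
by rewrite (eq_bigr _ (fun y _ => ans x xQ y)) ans // dist_sym.
Qed.

Lemma candidateE s : invariant s -> candidate s =1 unsettled (lcert s) (asked s).
Proof. by move=> Is v; rewrite /candidate lowerE // upperE. Qed.

Definition pending (s : state) : {set V} := [set v | unsettled (lcert s) (asked s) v].

Definition cost (s : state) : nat := #|ufound s| + 2 * #|lcert s|.

Lemma pending_shrink s s' v : lcert s \subset lcert s' -> asked s \subset asked s' ->
  unsettled (lcert s) (asked s) v -> ~~ unsettled (lcert s') (asked s') v ->
  #|pending s'| < #|pending s|.
Proof.
move=> sL sQ v_uns v_settled; apply/proper_card/properP; split.
  by apply/subsetP => w; rewrite !inE; apply: unsettled_subset.
by exists v; rewrite inE.
Qed.

Lemma antipode_step s v : invariant s -> unsettled (lcert s) (asked s) v ->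
  eccL (lcert s) v < ecc v ->
  let a := antipode (dist v) v in
  let s' := add_lcert (record_answer (record_answer s v (dist v)) a (dist a)) a in
  [/\ invariant s', cost s' = (cost s).+2 & #|pending s'| < #|pending s|].
Proof.
move=> [ans lcQ lcA ufU ufS] v_uns lt_v a s'.
have a_anti : is_antipode adj r v a := antipode_is_antipode v.
have dva : dist v a = ecc v := is_antipode_dist a_anti.
have sL : lcert s \subset lcert s' by apply/subsetP => x; apply: setU1r.
have sQ : asked s \subset asked s' by apply/subsetP => x xQ; rewrite !setU1r.
have a_new : a \notin lcert s.
  by apply: contraL lt_v => aL; rewrite -leqNgt -dva leq_bigmax_cond.
split.
- split.
  + by do 2 apply: answer_dist_record.
  + exact/setUS/(subset_trans lcQ)/subsetUr.
  + by rewrite subUset sub1set lcA inE andbT; apply/existsP; exists v.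
  + exact: ufU.
  + by move=> x /ufS; apply: contra; apply: unsettled_subset.
- by rewrite /cost /= cardsU1 a_new /=; lia.
- apply: pending_shrink sL sQ v_uns _; apply: settled_asked.
    by rewrite setU1r ?setU11.
  by rewrite -dva leq_bigmax_cond ?setU11.
Qed.

Lemma umax_step s v : invariant s -> unsettled (lcert s) (asked s) v ->
  (forall w, unsettled (lcert s) (asked s) w -> eccL (lcert s) v <= eccL (lcert s) w) ->
  ecc v <= eccL (lcert s) v ->
  let s' := add_ufound (record_answer s v (dist v)) v in
  [/\ invariant s', cost s' = (cost s).+1 & #|pending s'| < #|pending s|].
Proof.
move=> [ans lcQ lcA ufU ufS] v_uns v_least ecc_v s'.
have sQ : asked s \subset asked s' by apply/subsetP => x; apply: setU1r.
have v_settled : ~~ unsettled (lcert s') (asked s') v.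
  by apply: settled_asked; rewrite ?setU11.
have v_new : v \notin ufound s by apply: contraL v_uns; apply: ufS.
split.
- split.
  + exact: answer_dist_record.
  + exact: subset_trans lcQ sQ.
  + exact: lcA.
  + by rewrite /s' /= subUset sub1set (least_unsettled_Umax v_uns v_least ecc_v).
  + move=> x; rewrite /s' /= in_setU1 => /predU1P [-> // | /ufS]; apply: contra.
    exact: unsettled_subset (subxx _) sQ.
- by rewrite /cost /= cardsU1 v_new /=; lia.
- by apply: pending_shrink sQ v_uns v_settled; rewrite subxx.
Qed.

Definition sound (s : state) (A : dalg V) : Prop :=
  let '(e, L, U) := run_out dist A in
  [/\ e =1 ecc, tight_lower adj L, L \subset antipodes adj r, U = Umax adj &
      cost s + run_queries dist A = #|Umax adj| + 2 * #|L|].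

Lemma sound_shift s s' A A' : run_out dist A' = run_out dist A ->
  cost s + run_queries dist A' = cost s' + run_queries dist A ->
  sound s' A -> sound s A'.
Proof. by move=> out_eq count_eq; rewrite /sound out_eq count_eq. Qed.

Lemma finish_sound s : invariant s -> pending s = set0 -> sound s (finish s).
Proof.
move=> Is no_pending.
have settled v : ~~ unsettled (lcert s) (asked s) v.
  by apply/negP => v_uns; have := in_set0 v; rewrite -no_pending inE v_uns.
have lowerE' v : lower s v = ecc v by rewrite lowerE //; case: (settled_eccE (settled v)).
have tightQ : tight_upper adj (asked s).
  by apply: tight_upper_eccU => v; case: (settled_eccE (settled v)).
have umaxE : umax_of s = Umax adj.
  apply/setP => x; rewrite [x \in umax_of s]inE.
  have [xQ|xQ] /= := boolP (x \in asked s); last first.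
    by apply/esym/negbTE; apply: contra xQ; apply/subsetP/Umax_subset.
  by rewrite inE; apply: eq_forallb => y; rewrite !lowerE' (answer_dist Is xQ).
rewrite /sound /finish run_out_requery run_queries_requery /= umaxE -cardE.
split=> //; first by move=> v; rewrite -(lowerE Is).
  exact: lcert_antipodes.
rewrite cardsDS ?(ufound_Umax Is) // /cost.
have := subset_leq_card (ufound_Umax Is); lia.
Qed.

Lemma search_sound n s : invariant s -> #|pending s| <= n -> sound s (search n s).
Proof.
elim: n s => [|n IH] s Is; first by rewrite leqn0 cards_eq0 => /eqP/(finish_sound Is).
move=> pending_n /=; case: pickP => [v0 v0_cand | no_cand]; last first.
  apply: finish_sound => //; apply/setP => v; rewrite !inE -(candidateE Is).
  exact: no_cand.
case: arg_minnP => // v; rewrite (candidateE Is) => v_uns v_least.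
have v_least' w :
    unsettled (lcert s) (asked s) w -> eccL (lcert s) v <= eccL (lcert s) w.
  by rewrite -(candidateE Is) -!(lowerE Is); apply: v_least.
have [lt_v | ge_v] := ltnP (eccL (lcert s) v) (ecc v).
- have [Is' cost' pending'] := antipode_step Is v_uns lt_v.
  apply: sound_shift (IH _ Is' _); first by rewrite /= (lowerE Is) lt_v.
    by rewrite cost' /= (lowerE Is) lt_v /=; lia.
  by rewrite -ltnS (leq_trans pending').
- have [Is' cost' pending'] := umax_step Is v_uns v_least' ge_v.
  apply: sound_shift (IH _ Is' _); first by rewrite /= (lowerE Is) ltnNge ge_v.
    by rewrite cost' /= (lowerE Is) ltnNge ge_v /=; lia.
  by rewrite -ltnS (leq_trans pending').
Qed.

End Correctness.
End Algorithm.

Theorem theorem5 :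
  forall (V : finType) (disp : Order.disp_t) (R : orderType disp) (r : V -> R),
  injective r ->
  exists A : dalg V,
  forall adj : rel V,
  undirected_graph adj -> connected_graph adj ->
  let d := dist adj in
  let '(e, L, U) := run_out d A in
  [/\ e =1 ecc adj,
      tight_lower adj L /\ L \subset antipodes adj r,
      U = Umax adj,
      (tight_upper adj (Umax adj) /\
       forall U' : {set V}, tight_upper adj U' ->
         #|Umax adj| <= #|U'| /\ (#|U'| = #|Umax adj| -> U' = Umax adj)) &
      run_queries d A = #|Umax adj| + 2 * #|L|].
Proof.
move=> V disp R r _; exists (search r #|V| (init V)) => adj [adj_sym _] _.
have := search_sound adj_sym (invariant_init r adj) (max_card _).
rewrite /sound /cost !cards0 /=.
case: run_out => [[e L] U] [eccE tightL antiL UE count].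
by split=> //; split=> //; [exact: tight_upper_Umax | exact: Umax_min_card].
Qed.
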